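(* Let $\lambda$ be a partition with at most $N$ parts, $T$ a column-strict tableau of shape $\lambda$ and $\theta\in\mathsf M^{(N)}$ the matrix attached to $T$. Then $\psi_T(q,t)=c_N(\theta;t^{N-1}q^{\lambda_1},t^{N-2}q^{\lambda_2},\dots,q^{\lambda_N};q,t)$.
   Context: $(p;q)_n=(1-p)\cdots(1-q^{n-1}p)$, $n\in\mathbb N\cup\{\infty\}$. A tableau $T$ of shape $\lambda$ is a sequence $\emptyset=\lambda^{(0)}\subset\lambda^{(1)}\subset\dots\subset\lambda^{(N)}=\lambda$ of partitions with each $\lambda^{(k)}-\lambda^{(k-1)}$ a horizontal strip; its matrix is $\theta_{i,j}=\lambda^{(j)}_i-\lambda^{(j-1)}_i$ ($i<j$), an element of $\mathsf M^{(N)}$ (strictly upper triangular nonnegative integer matrices). With $f(u)=(tu;q)_\infty/(qu;q)_\infty$, $\psi_{\lambda/\mu}=\prod_{1\le i\le j\le\ell(\mu)}\frac{f(q^{\mu_i-\mu_j}t^{j-i})f(q^{\lambda_i-\lambda_{j+1}}t^{j-i})}{f(q^{\lambda_i-\mu_j}t^{j-i})f(q^{\mu_i-\lambda_{j+1}}t^{j-i})}$ and $\psi_T=\prod_{k=1}^N\psi_{\lambda^{(k)}/\lambda^{(k-1)}}$. $c_N$: $c_1=1$, $c_N(\theta;z)=c_{N-1}(\theta';q^{-\theta_{1,N}}z_1,\dots,q^{-\theta_{N-1,N}}z_{N-1})\prod_{1\le i\le j\le N-1}\frac{(tz_{j+1}/z_i;q)_{\theta_{i,N}}}{(qz_{j+1}/z_i;q)_{\theta_{i,N}}}\frac{(q^{1-\theta_{j,N}}z_j/(tz_i);q)_{\theta_{i,N}}}{(q^{-\theta_{j,N}}z_j/z_i;q)_{\theta_{i,N}}}$,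 $\theta'$ the upper-left $(N-1)\times(N-1)$ block. *)

From HB Require Import structures.
From mathcomp Require Import all_boot all_order all_algebra.
From mathcomp Require Import all_classical all_reals topology normedtype sequences.
Set Implicit Arguments. Unset Strict Implicit. Unset Printing Implicit Defensive.
Import Order.TTheory GRing.Theory Num.Theory.
Import numFieldNormedType.Exports.
Local Open Scope ring_scope.

(* Partitions and tableaux are encoded 1-indexed as functions nat -> nat:
   p i = p_i for i >= 1 (the value at index 0 is irrelevant). *)

Definition is_partition (p : nat -> nat) : Prop :=
  (forall i, (0 < i)%N -> (p i.+1 <= p i)%N) /\
  exists n, forall i, (n < i)%N -> p i = 0%N.

Definition hstrip (lam mu : nat -> nat) : Prop :=
  forall i, (0 < i)%N -> (mu i <= lam i)%N /\ (lam i.+1 <= mu i)%N.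

(* L k = lambda^(k); a tableau of shape lam with entries in {1..N}. *)
Definition is_tableau (N : nat) (lam : nat -> nat) (L : nat -> nat -> nat) : Prop :=
  (forall i, (0 < i)%N -> L 0%N i = 0%N) /\
  (forall k, (0 < k <= N)%N -> is_partition (L k) /\ hstrip (L k) (L k.-1)) /\
  (forall i, (0 < i)%N -> L N i = lam i).

(* the matrix theta_{i,j} = lambda^(j)_i - lambda^(j-1)_i (used for i < j) *)
Definition tab_matrix (L : nat -> nat -> nat) (i j : nat) : nat := (L j i - L j.-1 i)%N.

Definition plen (N : nat) (p : nat -> nat) : nat := \sum_(1 <= i < N.+1) (p i != 0%N).

Section Defs.
Variable R : realType.

Definition qpoch (p q : R) (n : nat) : R := \prod_(k < n) (1 - q ^+ k * p).

Definition qpoch_inf (p q : R) : R := limn (fun n => qpoch p q n).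

Definition ff (q t u : R) : R := qpoch_inf (t * u) q / qpoch_inf (q * u) q.

Definition qt (q t : R) (a b : int) (k : nat) : R := q ^ (a - b) * t ^+ k.

Definition psi_skew (N : nat) (q t : R) (lam mu : nat -> nat) : R :=
  \prod_(1 <= i < (plen N mu).+1) \prod_(i <= j < (plen N mu).+1)
    ((ff q t (qt q t (mu i) (mu j) (j - i)) * ff q t (qt q t (lam i) (lam j.+1) (j - i)))
     / (ff q t (qt q t (lam i) (mu j) (j - i)) * ff q t (qt q t (mu i) (lam j.+1) (j - i)))).

Definition psi_tab (N : nat) (q t : R) (L : nat -> nat -> nat) : R :=
  \prod_(1 <= k < N.+1) psi_skew N q t (L k) (L k.-1).

(* c_N(theta; z; q, t); theta and z are 1-indexed *)
Fixpoint cN (q t : R) (N : nat) (th : nat -> nat -> nat) (z : nat -> R) : R :=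
  match N with
  | 0%N => 1
  | M.+1 =>
      cN q t M th (fun i => q ^- th i N * z i) *
      \prod_(1 <= i < M.+1) \prod_(i <= j < M.+1)
        ((qpoch (t * z j.+1 / z i) q (th i N) / qpoch (q * z j.+1 / z i) q (th i N)) *
         (qpoch (q * q ^- th j N * z j / (t * z i)) q (th i N) /
          qpoch (q ^- th j N * z j / z i) q (th i N)))
  end.

End Defs.

(* Both sides factor along the tableau.  psi_T is a product over the skew
   shapes lambda^(k)/lambda^(k-1), and the recursion for c_N peels off the last
   column of theta; the new arguments q^(-theta_{i,N}) z_i are t times the
   variables of the smaller tableau, and c_N is invariant under a common scaling.
   So it suffices to match psi_{lambda/mu} with the last-column factor of c_N,
   term by term.  Put u = q^(mu_i - mu_j) t^(j-i), v = q^(mu_i - lambda_(j+1)) t^(j-i)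
   and th = lambda_i - mu_i.  The functional equation
   f(u) = (tu;q)_th / (qu;q)_th * f(q^th u) turns the psi-term into
   [skew_factor] = (qv;q)_th/(tv;q)_th * (tu;q)_th/(qu;q)_th, and the inversion
   (x;q)_th = prod_k (-q^k x) * (q^(1-th)/x;q)_th turns the c-term into the same
   expression; for j > l(mu) one has u = v, so the extra c-terms equal 1.
   Genericity of (q, t) keeps all Pochhammer symbols and all values of f nonzero,
   and (x;q)_oo exists because the partial products are monotone and bounded
   once q^K x is small. *)

From HB Require Import structures.
From mathcomp Require Import all_boot all_order all_algebra.
From mathcomp Require Import all_classical all_reals topology normedtype sequences.
From mathcomp Require Import ring lra zify.
Import Order.TTheory GRing.Theory Num.Theory.
Import numFieldNormedType.Exports.
Local Open Scope classical_set_scope.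
Local Open Scope ring_scope.

Section QPochhammer.
Context {R : realType}.
Implicit Types (p q : R) (n m : nat).

Definition nonresonant q p := forall k, q ^+ k * p != 1.

Lemma nonresonant_qX q p n : nonresonant q p -> nonresonant q (q ^+ n * p).
Proof. by move=> hp k; rewrite mulrA -exprD. Qed.

Lemma qpoch0 p q : qpoch p q 0 = 1.
Proof. by rewrite /qpoch big_ord0. Qed.

Lemma qpochS p q n : qpoch p q n.+1 = qpoch p q n * (1 - q ^+ n * p).
Proof. by rewrite /qpoch big_ord_recr. Qed.

Lemma qpochD p q n m : qpoch p q (n + m) = qpoch p q n * qpoch (q ^+ n * p) q m.
Proof.
rewrite /qpoch big_split_ord /=; congr (_ * _); apply: eq_bigr => k _.
by rewrite exprD mulrCA mulrA.
Qed.

Lemma qpoch_neq0 p q n : nonresonant q p -> qpoch p q n != 0.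
Proof. by move=> hp; apply/prodf_neq0 => k _; rewrite subr_eq0 eq_sym. Qed.

Lemma qpochN_mul p q n : qpoch (- p) q n * qpoch p q n = qpoch (p ^+ 2) (q ^+ 2) n.
Proof.
rewrite /qpoch -big_split /=; apply: eq_bigr => k _.
by rewrite exprAC; ring.
Qed.

Lemma qpoch_ge0_le1 p q n : 0 <= q <= 1 -> 0 <= p <= 1 -> 0 <= qpoch p q n <= 1.
Proof.
move=> /andP[q0 q1] /andP[p0 p1].
elim: n => [|n /andP[P0 P1]]; first by rewrite qpoch0 ler01 lexx.
have qn0 : 0 <= q ^+ n * p by rewrite mulr_ge0 ?exprn_ge0.
have qn1 : q ^+ n * p <= 1 by rewrite mulr_ile1 ?exprn_ge0 ?exprn_ile1.
by rewrite qpochS mulr_ge0 ?mulr_ile1 ?subr_ge0 // lerBlDr lerDl.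
Qed.

Lemma qpoch_reflect p q n : q != 0 -> p != 0 ->
  qpoch p q n = \prod_(k < n) (- (q ^+ k * p)) * qpoch (q ^ (1 - n%:Z) / p) q n.
Proof.
move=> q0 p0; rewrite [in RHS]/qpoch -(big_mkord xpredT (fun k => 1 - q ^+ k * _)).
rewrite big_rev_mkord subn0 /qpoch -big_split /=; apply: eq_bigr => k _.
have qk0 : q ^+ k != 0 by rewrite expf_neq0.
have -> : q ^+ (n - k.+1) * (q ^ (1 - n%:Z) / p) = (q ^+ k)^-1 / p.
  rewrite mulrA; congr (_ / p).
  rewrite -[q ^+ (n - _)]/(q ^ (n - k.+1)%N%:Z) -expfzDr //.
  rewrite -[(q ^+ k)^-1]/((q ^ k%:Z)^-1) invr_expz.
  by congr (q ^ _); have := ltn_ord k; lia.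
by field; rewrite p0 qk0.
Qed.

Lemma qpoch_ratio_reflect x y q n : q != 0 -> x != 0 -> y != 0 ->
  qpoch x q n / qpoch y q n =
  (x / y) ^+ n * (qpoch (q ^ (1 - n%:Z) / x) q n / qpoch (q ^ (1 - n%:Z) / y) q n).
Proof.
move=> q0 x0 y0; rewrite (qpoch_reflect _ _ n q0 x0) (qpoch_reflect _ _ n q0 y0).
rewrite invfM mulrACA -prodf_div; congr (_ * _).
rewrite -[in RHS](card_ord n) -prodr_const; apply: eq_bigr => k _.
have qk0 : q ^+ k != 0 by rewrite expf_neq0.
by field; rewrite y0 qk0.
Qed.

Lemma weierstrass_prod_ge (x : nat -> R) n : (forall k, 0 <= x k <= 1) ->
  1 - \sum_(k < n) x k <= \prod_(k < n) (1 - x k).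
Proof.
move=> x01; elim: n => [|n IH]; first by rewrite big_ord0 big_ord0 subr0.
rewrite !big_ord_recr /=; have /andP[x0 x1] := x01 n.
have S0 : 0 <= \sum_(k < n) x k by apply: sumr_ge0 => k _; have /andP[] := x01 k.
have : (1 - \sum_(k < n) x k) * (1 - x n) <= \prod_(k < n) (1 - x k) * (1 - x n).
  by rewrite ler_wpM2r // subr_ge0.
nra.
Qed.

End QPochhammer.

Section QPochhammerLimit.
Context {R : realType} {q : R}.
Hypotheses (q0 : 0 < q) (q1 : q < 1).

Let qX_ge0 k : 0 <= q ^+ k. Proof. exact: exprn_ge0 (ltW q0). Qed.
Let qX_le1 k : q ^+ k <= 1. Proof. exact: exprn_ile1 (ltW q0) (ltW q1). Qed.

Lemma qpoch_ge1 (a : R) n : a <= 0 -> 1 <= qpoch a q n.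
Proof.
move=> a0; elim: n => [|n IH]; first by rewrite qpoch0.
have qa : q ^+ n * a <= 0 by rewrite mulr_ge0_le0 ?qX_ge0.
rewrite qpochS; nra.
Qed.

Lemma qpoch_ge_half (a : R) n : `|a| <= (1 - q) / 2 -> 1 / 2 <= qpoch a q n.
Proof.
move=> ha; have [a0|a0] := lerP 0 a; last by have := qpoch_ge1 _ n (ltW a0); lra.
rewrite ger0_norm // in ha.
have qa01 k : 0 <= q ^+ k * a <= 1.
  by rewrite mulr_ge0 ?mulr_ile1 ?qX_ge0 ?qX_le1 //; have := q0; lra.
have sum_le : \sum_(k < n) q ^+ k * a <= 1 / 2.
  have := geometric_le_lim n a0 q0 (ltac:(by rewrite gtr0_norm)); rewrite /series /= big_mkord.
  under eq_bigr do rewrite mulrC.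
  by move/le_trans; apply; rewrite ler_pdivrMr ?subr_gt0 //; lra.
by have := weierstrass_prod_ge _ n qa01; rewrite /qpoch; lra.
Qed.

Lemma qpoch_le2 (a : R) n : a <= 0 -> `|a| <= (1 - q) / 2 -> qpoch a q n <= 2.
Proof.
move=> a0 ha.
have q2 : 0 <= q ^+ 2 <= 1 by rewrite qX_ge0 qX_le1.
have a2 : 0 <= a ^+ 2 <= 1.
  have /andP[a_ge a_le] : - 1 <= a <= 1 by rewrite -ler_norml; have := q0; lra.
  by rewrite sqr_ge0 /=; nra.
have prod_le1 : qpoch a q n * qpoch (- a) q n <= 1.
  rewrite -{1}(opprK a) qpochN_mul sqrrN.
  by case/andP: (qpoch_ge0_le1 _ _ n q2 a2).
have half := qpoch_ge_half (- a) n (ltac:(by rewrite normrN)).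
have := qpoch_ge1 _ n a0; nra.
Qed.

Lemma qpoch_cvg_small (a : R) : `|a| <= (1 - q) / 2 -> cvgn (qpoch a q).
Proof.
move=> ha; have [a0|a0] := lerP 0 a.
- apply: nonincreasing_is_cvgn.
    apply/nonincreasing_seqP => n; rewrite qpochS.
    have := qpoch_ge_half _ n ha; have : 0 <= q ^+ n * a by rewrite mulr_ge0 ?qX_ge0.
    nra.
  by exists 0 => _ [n _ <-]; have := qpoch_ge_half _ n ha; lra.
- apply: nondecreasing_is_cvgn.
    apply/nondecreasing_seqP => n; rewrite qpochS.
    have := qpoch_ge1 _ n (ltW a0); have : q ^+ n * a <= 0 by rewrite mulr_ge0_le0 ?qX_ge0 // ltW.
    nra.
  by exists 2 => _ [n _ <-]; apply: qpoch_le2 => //; apply: ltW.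
Qed.

Lemma qpow_mul_small (p : R) : exists K, `|q ^+ K * p| <= (1 - q) / 2.
Proof.
have qn0 : (fun n => q ^+ n * p) @ \oo --> 0.
  rewrite -(mul0r p); apply: cvgM; last exact: cvg_cst.
  by apply: cvg_expr; rewrite gtr0_norm.
have half_gt0 : 0 < (1 - q) / 2 by have := q1; lra.
have [K _ hK] := cvgr0_norm_le _ qn0 _ half_gt0.
by exists K; apply: hK; rewrite /= leqnn.
Qed.

Lemma qpoch_shift_cvg (p : R) n :
  cvgn (qpoch (q ^+ n * p) q) -> qpoch p q @ \oo --> qpoch p q n * limn (qpoch (q ^+ n * p) q).
Proof.
move=> hc; rewrite -(cvg_shiftn n).
have -> : (fun k => qpoch p q (k + n)) = (fun k => qpoch p q n * qpoch (q ^+ n * p) q k).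
  by apply/funext => k; rewrite addnC qpochD.
by apply: cvgM; first exact: cvg_cst.
Qed.

Lemma qpoch_cvg (p : R) : cvgn (qpoch p q).
Proof.
have [K hK] := qpow_mul_small p.
by apply/cvg_ex; eexists; apply: (qpoch_shift_cvg _ K); exact: qpoch_cvg_small.
Qed.

Lemma qpoch_inf_shift (p : R) n : qpoch_inf p q = qpoch p q n * qpoch_inf (q ^+ n * p) q.
Proof. by apply: cvg_lim => //; apply: qpoch_shift_cvg; apply: qpoch_cvg. Qed.

Lemma qpoch_inf_neq0 (p : R) : nonresonant q p -> qpoch_inf p q != 0.
Proof.
move=> hp; have [K hK] := qpow_mul_small p.
rewrite (qpoch_inf_shift p K) mulf_neq0 ?qpoch_neq0 // gt_eqF //.
apply: (@lt_le_trans _ _ (1 / 2)); first lra.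
by apply: limr_ge; [exact: qpoch_cvg_small | apply: nearW => n; exact: qpoch_ge_half].
Qed.

End QPochhammerLimit.

Definition skew_factor {R : realType} (q t : R) (th : nat) (u v : R) : R :=
  (qpoch (q * v) q th / qpoch (t * v) q th) * (qpoch (t * u) q th / qpoch (q * u) q th).

Section ShiftedRatio.
Context {R : realType} (q t : R).
Hypotheses (q0 : 0 < q) (q1 : q < 1).

Lemma ff_shift (u : R) n :
  ff q t u = qpoch (t * u) q n / qpoch (q * u) q n * ff q t (q ^+ n * u).
Proof.
rewrite /ff (qpoch_inf_shift q0 q1 (t * u) n) (qpoch_inf_shift q0 q1 (q * u) n).
by rewrite (mulrCA (q ^+ n) t) (mulrCA (q ^+ n) q) invfM mulrACA.
Qed.

Lemma ff_neq0 (u : R) : nonresonant q (t * u) -> nonresonant q (q * u) -> ff q t u != 0.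
Proof. by move=> tu qu; rewrite mulf_neq0 ?invr_eq0 ?qpoch_inf_neq0. Qed.

Lemma ff_ratio_shift (u v : R) th :
  nonresonant q (t * u) -> nonresonant q (q * u) ->
  nonresonant q (t * v) -> nonresonant q (q * v) ->
  ff q t u * ff q t (q ^+ th * v) / (ff q t (q ^+ th * u) * ff q t v) =
  skew_factor q t th u v.
Proof.
move=> tu qu tv qv.
have shift_neq0 w : nonresonant q (t * w) -> nonresonant q (q * w) ->
    ff q t (q ^+ th * w) != 0.
  by move=> tw qw; apply: ff_neq0; rewrite mulrCA; apply: nonresonant_qX.
have Fu := shift_neq0 _ tu qu; have Fv := shift_neq0 _ tv qv.
rewrite (ff_shift u th) (ff_shift v th) /skew_factor.
by field; rewrite Fu Fv !qpoch_neq0.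
Qed.

End ShiftedRatio.

Lemma skew_factor_diag {R : realType} (q t u : R) th :
  nonresonant q (t * u) -> nonresonant q (q * u) -> skew_factor q t th u u = 1.
Proof. by move=> tu qu; rewrite /skew_factor; field; rewrite !qpoch_neq0. Qed.

Definition cN_factor {R : realType} (q t : R) (th : nat -> nat) (z : nat -> R) (i j : nat) :=
  (qpoch (t * z j.+1 / z i) q (th i) / qpoch (q * z j.+1 / z i) q (th i)) *
  (qpoch (q * q ^- th j * z j / (t * z i)) q (th i) / qpoch (q ^- th j * z j / z i) q (th i)).

Definition psi_factor {R : realType} (q t : R) (la mu : nat -> nat) (i j : nat) :=
  (ff q t (qt q t (mu i) (mu j) (j - i)) * ff q t (qt q t (la i) (la j.+1) (j - i))) /
  (ff q t (qt q t (la i) (mu j) (j - i)) * ff q t (qt q t (mu i) (la j.+1) (j - i))).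

Lemma cN_succ {R : realType} (q t : R) n th (z : nat -> R) :
  cN q t n.+1 th z = cN q t n th (fun i => q ^- th i n.+1 * z i) *
    \prod_(1 <= i < n.+1) \prod_(i <= j < n.+1) cN_factor q t (th ^~ n.+1) z i j.
Proof. by []. Qed.

Lemma cN_scale {R : realType} {q t : R} {n th} {z z' : nat -> R} {c : R} : c != 0 ->
  (forall i, (0 < i <= n)%N -> z' i = c * z i) -> cN q t n th z' = cN q t n th z.
Proof.
move=> c0; have cancel_l (k a b : R) : k * (c * a) / (c * b) = k * a / b.
  by rewrite mulrCA invfM mulrACA divff // mul1r.
have cancel_r (k m a b : R) : k * (c * a) / (m * (c * b)) = k * a / (m * b).
  by rewrite (mulrCA m) cancel_l.
elim: n z z' => [|n IH] z z' hz //=; congr (_ * _).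
  by apply: IH => i /andP[i0 iN]; rewrite mulrCA hz // i0 leqW.
apply: eq_big_nat => i /andP[i1 i2]; apply: eq_big_nat => j /andP[j1 j2].
by rewrite !hz ?cancel_l ?cancel_r //; lia.
Qed.

Lemma big_nat_triangle_trunc {R : pzSemiRingType} (G : nat -> nat -> R) m n : (m <= n)%N ->
  (forall i j, (0 < i <= j)%N -> (m < j <= n)%N -> G i j = 1) ->
  \prod_(1 <= i < n.+1) \prod_(i <= j < n.+1) G i j =
  \prod_(1 <= i < m.+1) \prod_(i <= j < m.+1) G i j.
Proof.
move=> mn; rewrite -(subnKC mn); move: (n - m)%N => d {n mn}.
elim: d => [|d IH] G1; first by rewrite addn0.
rewrite -IH => [|i j /andP[i0 ij] /andP[mj jd]]; last by apply: G1; lia.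
rewrite addnS big_nat_recr /= ?big_nat1 ?G1 ?mulr1; try lia.
apply: eq_big_nat => i /andP[i1 i2].
by rewrite big_nat_recr /= ?G1 ?mulr1 //; lia.
Qed.

Lemma plen_spec N n (mu : nat -> nat) : (n <= N)%N ->
  (forall i, (0 < i)%N -> (mu i.+1 <= mu i)%N) -> (forall i, (n < i)%N -> mu i = 0%N) ->
  (plen N mu <= n)%N /\ (forall i, (plen N mu < i)%N -> mu i = 0%N).
Proof.
move=> nN mu_noninc mu0.
have ex0 : exists i, (0 < i)%N && (mu i == 0%N) by exists n.+1; rewrite mu0.
case: (ex_minnP ex0) => l /andP[l0 /eqP mul] l_min.
have ln : (l <= n.+1)%N by apply: l_min; rewrite mu0.
have below k : (0 < k < l)%N -> mu k != 0%N.
  by case/andP=> k0 kl; apply/eqP => muk; have := l_min k; rewrite k0 muk; lia.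
have above d : mu (l + d)%N = 0%N.
  elim: d => [|d IH]; first by rewrite addn0.
  by have := mu_noninc (l + d)%N; rewrite addnS IH; lia.
have -> : plen N mu = l.-1.
  rewrite /plen (big_cat_nat (n := l)) /=; try lia.
  rewrite (eq_big_nat _ _ (F2 := fun _ => 1%N)) => [|i /andP[i1 i2]]; last by rewrite below ?i1.
  rewrite sum_nat_const_nat muln1 big1_seq ?addn0 => [|i /andP[_]]; first lia.
  by rewrite mem_index_iota => /andP[li _]; rewrite -(subnKC li) above.
split=> [|i li]; first lia.
by rewrite -(subnKC (_ : l <= i)%N) ?above //; lia.
Qed.

Lemma tableau_noninc N lam L k i : is_tableau N lam L -> (k <= N)%N -> (0 < i)%N ->
  (L k i.+1 <= L k i)%N.
Proof.
case=> L0 [Lk _] kN i0; case: k kN => [|k] kN; first by rewrite !L0.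
by apply: (Lk k.+1 _).1.1.
Qed.

Lemma tableau_zero N lam L k i : is_tableau N lam L -> (k <= N)%N -> (k < i)%N -> L k i = 0%N.
Proof.
case=> L0 [Lk _]; elim: k i => [|k IH] i kN ki; first by rewrite L0 // (leq_ltn_trans _ ki).
have strip := (Lk k.+1 (ltac:(lia))).2.
have := (strip i.-1 (ltac:(lia))).2; rewrite prednK /=; last lia.
by rewrite IH //; lia.
Qed.

Section Factors.
Context {R : realType} {q t : R}.
Hypotheses (q0 : 0 < q) (q1 : q < 1) (t0 : t != 0).
Hypothesis generic : forall a b : int, (a, b) != (0, 0) -> q ^ a * t ^ b != 1.

Let qn0 : q != 0. Proof. by rewrite gt_eqF. Qed.

Definition qtpow (A B : int) := q ^ A * t ^ B.

Lemma qtpowM A B C D : qtpow A B * qtpow C D = qtpow (A + C) (B + D).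
Proof. by rewrite /qtpow !expfzDr // mulrACA. Qed.

Lemma qtpowV A B : (qtpow A B)^-1 = qtpow (- A) (- B).
Proof. by rewrite /qtpow invfM !invr_expz. Qed.

Lemma qtpowXn A B (n : nat) : qtpow A B ^+ n = qtpow (A * n) (B * n).
Proof. by rewrite /qtpow exprMn -!exprz_exp. Qed.

Lemma qtpowXz A B (z : int) : qtpow A B ^ z = qtpow (A * z) (B * z).
Proof. by rewrite /qtpow expfzMl !exprz_exp. Qed.

Lemma qtpow_q : q = qtpow 1 0. Proof. by rewrite /qtpow expr1z expr0z mulr1. Qed.
Lemma qtpow_t : t = qtpow 0 1. Proof. by rewrite /qtpow expr1z expr0z mul1r. Qed.
Lemma qtpow00 : qtpow 0 0 = 1. Proof. by rewrite /qtpow !expr0z mulr1. Qed.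

Lemma qtpow_neq0 A B : qtpow A B != 0.
Proof. by rewrite mulf_neq0 // expfz_neq0. Qed.

Local Ltac qtpow_norm :=
  rewrite ?qtpow_q ?qtpow_t !(qtpowXn, qtpowXz, qtpowV, qtpowM); congr qtpow; lia.

Lemma nonresonant_qtpow (A B : int) :
  (forall k : nat, (k%:Z + A != 0) || (B != 0)) -> nonresonant q (qtpow A B).
Proof.
move=> h k; rewrite {1}qtpow_q qtpowXn qtpowM mul1r mul0r add0r.
by apply: generic; rewrite xpair_eqE negb_and.
Qed.

Lemma skew_args_nonresonant {la mu : nat -> nat} {i j : nat} :
  (i <= j)%N -> (la i.+1 <= mu i)%N ->
  let u := qt q t (mu i) (mu j) (j - i) in let v := qt q t (mu i) (la j.+1) (j - i) in
  [/\ nonresonant q (t * u), nonresonant q (q * u),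
      nonresonant q (t * v) & nonresonant q (q * v)].
Proof.
move=> ij strip u v.
have -> : t * u = qtpow ((mu i)%:Z - (mu j)%:Z) (j - i + 1)%N by rewrite /u /qt; qtpow_norm.
have -> : q * u = qtpow (1 + (mu i)%:Z - (mu j)%:Z) (j - i)%N by rewrite /u /qt; qtpow_norm.
have -> : t * v = qtpow ((mu i)%:Z - (la j.+1)%:Z) (j - i + 1)%N by rewrite /v /qt; qtpow_norm.
have -> : q * v = qtpow (1 + (mu i)%:Z - (la j.+1)%:Z) (j - i)%N by rewrite /v /qt; qtpow_norm.
(* A vanishing t-exponent forces j = i, where the q-exponent is positive. *)
split; apply: nonresonant_qtpow => k; rewrite -negb_and;
  apply/negP => /andP[/eqP q_exp /eqP t_exp]; [lia| | lia |];
  have ji : j = i by lia.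
- by move: q_exp; rewrite ji; lia.
- by move: q_exp; rewrite ji; lia.
Qed.

Lemma psi_factor_skew {la mu : nat -> nat} {i j : nat} :
  (i <= j)%N -> (mu i <= la i)%N -> (la i.+1 <= mu i)%N ->
  psi_factor q t la mu i j =
  skew_factor q t (la i - mu i) (qt q t (mu i) (mu j) (j - i)) (qt q t (mu i) (la j.+1) (j - i)).
Proof.
move=> ij mu_le strip; have [tu qu tv qv] := skew_args_nonresonant ij strip.
rewrite -ff_ratio_shift // /psi_factor; congr (ff q t _ * ff q t _ / (ff q t _ * _));
  rewrite /qt; qtpow_norm.
Qed.

Lemma cN_factor_skew {n : nat} {la mu : nat -> nat} {i j : nat} :
  (i <= j <= n)%N -> (mu i <= la i)%N -> (mu j <= la j)%N ->
  cN_factor q t (fun k => la k - mu k)%N (fun k => t ^+ (n.+1 - k) * q ^+ la k) i j =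
  skew_factor q t (la i - mu i) (qt q t (mu i) (mu j) (j - i)) (qt q t (mu i) (la j.+1) (j - i)).
Proof.
move=> /andP[ij jn] mui muj; rewrite /cN_factor.
set th := (la i - mu i)%N.
set x1 := t * _ / _; set y1 := q * _ / _.
set x2 := q / q ^+ _ * _ / _; set y2 := q ^- _ * _ / _.
have ex1 : x1 = qtpow ((la j.+1)%:Z - (la i)%:Z) (i%:Z - j%:Z) by rewrite /x1; qtpow_norm.
have ey1 : y1 = qtpow (1 + (la j.+1)%:Z - (la i)%:Z) (i%:Z - j%:Z - 1) by rewrite /y1; qtpow_norm.
have ex2 : x2 = qtpow (1 + (mu j)%:Z - (la i)%:Z) (i%:Z - j%:Z - 1) by rewrite /x2; qtpow_norm.
have ey2 : y2 = qtpow ((mu j)%:Z - (la i)%:Z) (i%:Z - j%:Z) by rewrite /y2; qtpow_norm.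
have [x1n y1n x2n y2n] : [/\ x1 != 0, y1 != 0, x2 != 0 & y2 != 0].
  by rewrite ex1 ey1 ex2 ey2 !qtpow_neq0.
rewrite (qpoch_ratio_reflect _ _ _ th qn0 x1n y1n) (qpoch_ratio_reflect _ _ _ th qn0 x2n y2n).
rewrite mulrACA -exprMn.
have -> : x1 / y1 * (x2 / y2) = 1.
  by rewrite -qtpow00 ex1 ey1 ex2 ey2; qtpow_norm.
rewrite expr1n mul1r /skew_factor.
by congr (qpoch _ _ _ / qpoch _ _ _ * (qpoch _ _ _ / qpoch _ _ _));
  rewrite ?ex1 ?ey1 ?ex2 ?ey2 /th /qt; qtpow_norm.
Qed.

Lemma psi_skew_eq_cN_factors N n (la mu : nat -> nat) : (n <= N)%N -> hstrip la mu ->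
  (forall i, (0 < i)%N -> (mu i.+1 <= mu i)%N) -> (forall i, (n < i)%N -> mu i = 0%N) ->
  psi_skew N q t la mu = \prod_(1 <= i < n.+1) \prod_(i <= j < n.+1)
    cN_factor q t (fun k => la k - mu k)%N (fun k => t ^+ (n.+1 - k) * q ^+ la k) i j.
Proof.
move=> nN strip mu_noninc mu0; have [plen_n mu0_plen] := plen_spec N n mu nN mu_noninc mu0.
have -> : psi_skew N q t la mu = \prod_(1 <= i < (plen N mu).+1)
    \prod_(i <= j < (plen N mu).+1) psi_factor q t la mu i j by [].
rewrite (big_nat_triangle_trunc (cN_factor q t _ _) _ _ plen_n); last first.
  move=> i j /andP[i0 ij] /andP[lj jn].
  have muj : mu j = 0%N by apply: mu0_plen.
  have laj : la j.+1 = 0%N by have := (strip j (leq_trans i0 ij)).2; rewrite muj; lia.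
  have [tu qu _ _] := skew_args_nonresonant ij (strip i i0).2.
  rewrite (cN_factor_skew _ (strip i i0).1 (strip j (leq_trans i0 ij)).1); last by rewrite ij.
  by rewrite muj laj; apply: skew_factor_diag; rewrite -muj.
apply: eq_big_nat => i /andP[i0 _]; apply: eq_big_nat => j /andP[ij jl].
have j0 := leq_trans i0 ij; have jn : (j <= n)%N by rewrite (leq_trans _ plen_n).
rewrite (psi_factor_skew ij (strip i i0).1 (strip i i0).2).
by rewrite (cN_factor_skew _ (strip i i0).1 (strip j j0).1) // ij.
Qed.

Lemma psi_tab_prefix N lam L n : is_tableau N lam L -> (n <= N)%N ->
  \prod_(1 <= k < n.+1) psi_skew N q t (L k) (L k.-1) =
  cN q t n (tab_matrix L) (fun i => t ^+ (n - i) * q ^+ L n i).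
Proof.
move=> tab; elim: n => [|n IH] nN; first by rewrite big_geq.
have strip := (tab.2.1 n.+1 (ltac:(lia))).2.
rewrite big_nat_recr // IH; last exact: ltnW.
rewrite cN_succ; congr (_ * _).
  symmetry; apply: (cN_scale t0) => i /andP[i0 iN].
  by have := (strip i i0).1; rewrite /tab_matrix /= => mu_le; qtpow_norm.
apply: psi_skew_eq_cN_factors strip _ _; first exact: ltnW.
- by move=> i; apply: tableau_noninc tab (ltnW nN).
- by move=> i; apply: tableau_zero tab (ltnW nN).
Qed.

End Factors.

Theorem lemma3p1 (R : realType) (q t : R) (N : nat) (lam : nat -> nat)
    (L : nat -> nat -> nat) :
  0 < q < 1 -> t != 0 ->
  (forall a b : int, (a, b) != (0, 0) -> q ^ a * t ^ b != 1) ->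
  (0 < N)%N ->
  is_partition lam -> (forall i, (N < i)%N -> lam i = 0%N) ->
  is_tableau N lam L ->
  psi_tab N q t L =
  cN q t N (tab_matrix L) (fun i => t ^+ (N - i) * q ^+ (lam i)).
Proof.
(* The hypotheses on [lam] are consequences of [is_tableau]. *)
move=> /andP[q0 q1] t0 generic _ _ _ tab.
rewrite /psi_tab (psi_tab_prefix q0 q1 t0 generic _ _ _ _ tab (leqnn N)).
apply: (cN_scale (oner_neq0 R)) => i /andP[i0 _].
by rewrite mul1r tab.2.2.
Qed.
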